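(* Let $\alpha_0>0$, let $N\ge 1$ be an integer, and let $\gamma_1,\dots,\gamma_N$ be distinct positive real numbers. Then: (i) The determinant \[ \Delta_N(\gamma_1,\dots,\gamma_N)=\det\left(1,\ \frac{(\gamma_\sigma)_1}{(\gamma_\sigma+\alpha_0)_1},\ \dots,\ \frac{(\gamma_\sigma)_{N-1}}{(\gamma_\sigma+\alpha_0)_{N-1}}\right)_{\sigma=1,\dots,N} \] (the $\sigma$-th row being the displayed vector) is nonzero. (ii) The linear system \[ 1+\frac{(\gamma_\sigma)_1}{(\gamma_\sigma+\alpha_0)_1}b_1+\cdots+\frac{(\gamma_\sigma)_N}{(\gamma_\sigma+\alpha_0)_N}b_N=0,\qquad \sigma=1,\dots,N, \] in the unknowns $b_1,\dots,b_N$ has a unique solution, given by \[ b_{k+1}=\sum_{\ell=k}^{N-1}(-1)^{\ell+1}\frac{(\alpha_0-1)_{\ell-k}}{(\ell-k)!}\,\frac{(\alpha_0+\ell+1)_{N-\ell-1}}{(N-\ell-1)!}\prod_{\sigma=1}^N\frac{\gamma_\sigma+\alpha_0+\ell}{\gamma_\sigma},\qquad k=0,1,\dots,N-1. \] (iii) If $\gamma_0>0$ and $\gamma_0\neq\gamma_\sigma$ for $\sigma=1,\dots,N$, then with the $b_k$ from (ii), \[ 1+\frac{(\gamma_0)_1}{(\gamma_0+\alpha_0)_1}b_1+\cdots+\frac{(\gamma_0)_N}{(\gamma_0+\alpha_0)_N}b_N\neq 0. \]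
   Context: Pochhammer symbol: $(x)_0=1$ and $(x)_n=x(x+1)\cdots(x+n-1)$ for $n\ge1$. *)

From HB Require Import structures.
From mathcomp Require Import all_boot all_order all_algebra.
Set Implicit Arguments. Unset Strict Implicit. Unset Printing Implicit Defensive.
Import Order.TTheory GRing.Theory Num.Theory.
Local Open Scope ring_scope.

Definition poch (R : nzRingType) (x : R) (n : nat) : R :=
  \prod_(i < n) (x + i%:R).

Definition coef (R : fieldType) (a0 g : R) (n : nat) : R :=
  poch g n / poch (g + a0) n.

(* the explicit solution b_{k+1}, for k = 0..N-1 *)
Definition bsol (R : fieldType) (N : nat) (a0 : R) (gam : 'I_N -> R) (k : nat) : R :=
  \sum_(k <= l < N)
    (-1) ^+ l.+1 * (poch (a0 - 1) (l - k) / ((l - k)`!)%:R)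
      * (poch (a0 + l.+1%:R) (N - l.+1) / ((N - l.+1)`!)%:R)
      * \prod_(s < N) ((gam s + a0 + l%:R) / gam s).

(* Clearing the denominator (g + a0)_N turns the left-hand side of the
   system at g into P(g) / (g + a0)_N, where P = p_0 + \sum_k b_k p_(k+1) and
   p_j(x) = (x)_j (x + a0 + j)_(N-j) has degree N.  The p_j are linearly
   independent (p_j vanishes at 0, -1, ..., -(j-1) but not at -j), which gives
   (i) and identifies solutions b with such polynomials P vanishing at the
   gamma's.  As p_j(0) = 0 for j >= 1 and p_0(0) = (a0)_N, the only candidate is
   the polynomial of degree N with roots gamma and value (a0)_N at 0, namely
   (a0)_N \prod (1 - x / gamma); it does not vanish elsewhere, giving (iii).
   The explicit b is checked by evaluating at the N further points -(a0 + m):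
   there p_(k+1) vanishes for k < m, and the remaining sums collapse by the
   Chu-Vandermonde identity for rising factorials. *)

From HB Require Import structures.
From mathcomp Require Import all_boot all_order all_algebra.
From mathcomp Require Import ring zify.
Import Order.TTheory GRing.Theory Num.Theory.
Local Open Scope ring_scope.
Set Implicit Arguments. Unset Strict Implicit. Unset Printing Implicit Defensive.

Section Pochhammer.
Variable R : comNzRingType.
Implicit Types (x y : R) (m n : nat).

Lemma poch0 x : poch x 0 = 1.
Proof. by rewrite /poch big_ord0. Qed.

Lemma pochS x n : poch x n.+1 = poch x n * (x + n%:R).
Proof. by rewrite /poch big_ord_recr. Qed.

Lemma pochD x m n : poch x (m + n) = poch x m * poch (x + m%:R) n.
Proof.
rewrite /poch big_split_ord /=; congr (_ * _); apply: eq_bigr => i _.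
by rewrite natrD addrA.
Qed.

Lemma poch1 n : poch (1 : R) n = n`!%:R.
Proof.
by elim: n => [|n IHn]; rewrite ?poch0 // pochS IHn factS natrM -natr1; ring.
Qed.

Lemma pochN x n : poch (- x) n = (-1) ^+ n * poch (x - n%:R + 1) n.
Proof.
rewrite /poch -[n in (-1) ^+ n]card_ord -prodrN (reindex_inj rev_ord_inj) /=.
apply: eq_bigr => i _; rewrite natrB //; ring.
Qed.

Lemma poch_Nnat_eq0 m n : (m < n)%N -> poch (- m%:R : R) n = 0.
Proof. by move=> ltmn; rewrite /poch (bigD1 (Ordinal ltmn)) //= addNr mul0r. Qed.

Lemma poch_0l n : poch (0 : R) n = (n == 0%N)%:R.
Proof.
case: n => [|n]; first by rewrite poch0.
by have := poch_Nnat_eq0 (ltn0Sn n); rewrite oppr0.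
Qed.

Lemma poch_addl x y n :
  poch (x + y) n = \sum_(j < n.+1) 'C(n, j)%:R * (poch x j * poch y (n - j)).
Proof.
elim: n => [|n IHn].
  by rewrite big_ord_recl big_ord0 /= subn0 !poch0 bin0 addr0 !mulr1.
have splitS (j : 'I_n.+1) :
    'C(n, j)%:R * (poch x j * poch y (n - j)) * (x + y + n%:R)
  = 'C(n, j)%:R * (poch x j.+1 * poch y (n - j))
    + 'C(n, j)%:R * (poch x j * poch y (n - j).+1).
  have lejn : (j <= n)%N by rewrite -ltnS.
  by rewrite !pochS natrB //; ring.
rewrite pochS IHn mulr_suml (eq_bigr _ (fun j _ => splitS j)) big_split /=.
rewrite [RHS]big_ord_recl /= subn0.
under [X in _ = _ + X]eq_bigr => i _ do
  rewrite /bump /= add1n subSS binS natrD mulrDl.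
rewrite big_split /= [RHS]addrA [LHS]addrC; congr (_ + _).
rewrite [X in _ = _ + X]big_ord_recr /= (bin_small (ltnSn n)) mul0r addr0.
rewrite big_ord_recl /= !bin0 subn0; congr (_ + _).
by apply: eq_bigr => i _; rewrite /bump /= add1n subnSK.
Qed.
End Pochhammer.

Lemma poch_gt0 (R : numDomainType) (x : R) n : 0 < x -> 0 < poch x n.
Proof. by move=> x_gt0; apply: prodr_gt0 => i _; rewrite ltr_wpDr. Qed.

Lemma natr_fact_neq0 (R : numDomainType) n : n`!%:R != 0 :> R.
Proof. by rewrite pnatr_eq0 -lt0n fact_gt0. Qed.

Lemma sum_poch_div_fact (R : numFieldType) (x y : R) n :
  \sum_(j < n.+1) poch x j / j`!%:R * (poch y (n - j) / (n - j)`!%:R)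
  = poch (x + y) n / n`!%:R.
Proof.
rewrite poch_addl mulr_suml; apply: eq_bigr => j _.
have lejn : (j <= n)%N by rewrite -ltnS.
rewrite -(bin_fact lejn) !natrM.
have binC_neq0 : 'C(n, j)%:R != 0 :> R by rewrite pnatr_eq0 -lt0n bin_gt0.
by field; rewrite binC_neq0 !natr_fact_neq0.
Qed.

Definition pochp (R : nzRingType) (c : R) n : {poly R} :=
  \prod_(i < n) ('X + (c + i%:R)%:P).

Lemma size_pochp (R : nzRingType) (c : R) n : size (pochp c n) = n.+1.
Proof.
rewrite /pochp (eq_bigr (fun i : 'I_n => 'X - (- (c + i%:R))%:P)).
  by rewrite size_prod_XsubC [index_enum _]unlock -enumT size_enum_ord.
by move=> i _; rewrite polyCN opprK.
Qed.

Lemma horner_pochp (R : comNzRingType) (c x : R) n : (pochp c n).[x] = poch (x + c) n.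
Proof.
rewrite /pochp horner_prod; apply: eq_bigr => i _.
by rewrite hornerD hornerX hornerC addrA.
Qed.

Lemma eq_poly_roots (R : idomainType) (p q : {poly R}) (rs : seq R) :
  (size p <= size rs)%N -> (size q <= size rs)%N -> uniq rs ->
  {in rs, forall x, p.[x] = q.[x]} -> p = q.
Proof.
move=> szp szq rs_uniq pq; apply/eqP; rewrite -subr_eq0; apply/eqP.
apply: roots_geq_poly_eq0 rs_uniq _.
  by apply/allP => x /pq; rewrite /root hornerD hornerN => ->; rewrite subrr.
by rewrite (leq_trans (size_polyD _ _)) // size_polyN geq_max szp.
Qed.

Section CoefPoly.
Variables (R : numFieldType) (a0 : R).
Hypothesis a0_gt0 : 0 < a0.

Definition coefp M j : {poly R} := pochp 0 j * pochp (a0 + j%:R) (M - j).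

Lemma horner_coefp M j x :
  (coefp M j).[x] = poch x j * poch (x + a0 + j%:R) (M - j).
Proof. by rewrite hornerM !horner_pochp addr0 addrA. Qed.

Lemma size_coefp M j : (j <= M)%N -> (size (coefp M j) <= M.+1)%N.
Proof.
move=> lejM; rewrite (leq_trans (size_polyMleq _ _)) // !size_pochp.
by rewrite addnS /= addSn subnKC.
Qed.

Lemma coefE M j g : (j <= M)%N -> 0 <= g ->
  coef a0 g j = (coefp M j).[g] / poch (g + a0) M.
Proof.
move=> lejM g_ge0; rewrite horner_coefp -(subnKC lejM) pochD subnKC //.
have poch_neq0 : poch (g + a0 + j%:R) (M - j) != 0.
  by rewrite gt_eqF // poch_gt0 // ltr_wpDr // ltr_wpDl.
by rewrite /coef invfM mulrA [X in _ = X / _]mulrAC mulfK.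
Qed.

Lemma coefp_Nnat_eq0 M d j : (d < j)%N -> (coefp M j).[- d%:R] = 0.
Proof. by move=> ltdj; rewrite horner_coefp poch_Nnat_eq0 // mul0r. Qed.

Lemma coefp_Nnat_neq0 M d : (coefp M d).[- d%:R] != 0.
Proof.
rewrite horner_coefp pochN subrr add0r poch1 addrAC addNr add0r.
rewrite !mulf_neq0 ?signr_eq0 ?natr_fact_neq0 //.
by rewrite gt_eqF // poch_gt0.
Qed.

Lemma coefp_node_eq0 N k m : (k < m)%N -> (m < N)%N ->
  (coefp N k.+1).[- (a0 + m%:R)] = 0.
Proof.
move=> ltkm ltmN; rewrite horner_coefp.
have -> : - (a0 + m%:R) + a0 + k.+1%:R = - (m - k.+1)%:R by rewrite natrB //; ring.
by rewrite poch_Nnat_eq0 ?mulr0 // ltn_sub2r // (leq_ltn_trans ltkm).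
Qed.

Lemma coefp_node N m t : (m + t < N)%N ->
  (coefp N (m + t).+1).[- (a0 + m%:R)]
  = (-1) ^+ m.+1 * poch a0 m.+1 * (poch (1 - a0) t / t`!%:R) * (N - m.+1)`!%:R.
Proof.
move=> ltN; rewrite horner_coefp -addSn pochD pochN.
have -> : a0 + m%:R - m.+1%:R + 1 = a0 by rewrite -natr1; ring.
have -> : - (a0 + m%:R) + m.+1%:R = 1 - a0 by rewrite -natr1; ring.
have -> : - (a0 + m%:R) + a0 + (m.+1 + t)%:R = 1 + t%:R by rewrite natrD -natr1; ring.
have -> : (N - m.+1)`!%:R = t`!%:R * poch (1 + t%:R) (N - (m.+1 + t)) :> R.
  by rewrite -!poch1 -pochD subnDA subnKC //; lia.
by field; rewrite natr_fact_neq0.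
Qed.

Lemma coefp_lin_indep M n d (c : 'I_n -> R) : (n + d <= M.+1)%N ->
  \sum_(j < n) c j *: coefp M (j + d) = 0 -> forall j, c j = 0.
Proof.
elim: n d c => [|n IHn] d c le_ndM sum0 j; first by case: j.
have c0 : c ord0 = 0.
  move/(congr1 (horner^~ (- d%:R))): sum0.
  rewrite horner0 horner_sum big_ord_recl big1 => [|i _]; last first.
    by rewrite hornerZ coefp_Nnat_eq0 ?mulr0 // lift0 addSn ltnS leq_addl.
  rewrite addr0 hornerZ add0n => /eqP; rewrite mulf_eq0.
  by rewrite (negbTE (coefp_Nnat_neq0 _ _)) orbF => /eqP.
have cS : forall i, c (lift ord0 i) = 0.
  apply: (IHn d.+1); first by rewrite addnS -addSn.
  rewrite -[RHS]sum0 big_ord_recl c0 scale0r add0r.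
  by apply: eq_bigr => i _; rewrite lift0 addSnnS.
by case: (unliftP ord0 j) => [i ->|->].
Qed.

Lemma coefp_comb_eq0 M n d (c : 'I_n -> R) (rs : seq R) :
  (n + d <= M.+1)%N -> uniq rs -> (M < size rs)%N ->
  {in rs, forall x, (\sum_(j < n) c j *: coefp M (j + d)).[x] = 0} ->
  forall j, c j = 0.
Proof.
move=> le_ndM rs_uniq szrs rs_roots; apply: (coefp_lin_indep le_ndM).
apply: (eq_poly_roots _ _ rs_uniq) => [||x /rs_roots->]; rewrite ?size_poly0 ?horner0 //.
rewrite (leq_trans (size_sum _ _ _)) //; apply/bigmax_leqP => j _.
rewrite (leq_trans (size_scale_leq _ _)) // (leq_trans (size_coefp _)) //.
by rewrite -ltnS (leq_trans _ le_ndM) // ltn_add2r.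
Qed.

Section System.
Variable N : nat.

Definition sysp (b : 'I_N -> R) : {poly R} :=
  coefp N 0 + \sum_(j < N) b j *: coefp N j.+1.

Lemma sysp_horner b g : 0 <= g ->
  1 + \sum_(j < N) coef a0 g j.+1 * b j = (sysp b).[g] / poch (g + a0) N.
Proof.
move=> g_ge0; rewrite hornerD horner_sum mulrDl.
rewrite horner_coefp poch0 mul1r subn0 addr0 divff; last first.
  by rewrite gt_eqF // poch_gt0 // ltr_wpDl.
congr (_ + _); rewrite mulr_suml; apply: eq_bigr => j _.
by rewrite (coefE (ltn_ord j)) // hornerZ mulrC mulrA.
Qed.

Lemma horner_sysp0 b : (sysp b).[0] = poch a0 N.
Proof.
rewrite hornerD horner_sum big1 => [|j _]; last first.
  by have := coefp_Nnat_eq0 N (ltn0Sn j); rewrite oppr0 hornerZ => ->; rewrite mulr0.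
by rewrite addr0 horner_coefp poch0 mul1r subn0 add0r addr0.
Qed.

Lemma size_sysp b : (size (sysp b) <= N.+1)%N.
Proof.
rewrite (leq_trans (size_polyD _ _)) // geq_max size_coefp //=.
rewrite (leq_trans (size_sum _ _ _)) //; apply/bigmax_leqP => j _.
by rewrite (leq_trans (size_scale_leq _ _)) // size_coefp.
Qed.

Lemma sysp_inj b1 b2 : sysp b1 = sysp b2 -> b1 =1 b2.
Proof.
move=> /addrI eq_sums j; apply/eqP; rewrite -subr_eq0; apply/eqP; move: j.
apply: (@coefp_lin_indep N N 1); first by rewrite addn1.
under eq_bigr => j _ do rewrite addn1 scalerBl.
by rewrite sumrB eq_sums subrr.
Qed.

Lemma sum_coefp_node l m : (l < N)%N -> (m < N)%N ->
  \sum_(k < l.+1)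
    poch (a0 - 1) (l - k) / (l - k)`!%:R * (coefp N k.+1).[- (a0 + m%:R)]
  = (l == m)%:R * ((-1) ^+ m.+1 * poch a0 m.+1 * (N - m.+1)`!%:R).
Proof.
move=> ltlN ltmN; case: (ltnP l m) => [ltlm | lelm].
  rewrite (ltn_eqF ltlm) mul0r big1 // => k _.
  by rewrite coefp_node_eq0 ?mulr0 // (leq_ltn_trans _ ltlm) // -ltnS.
have [n def_l] : exists n, l = (m + n)%N by exists (l - m)%N; rewrite subnKC.
rewrite def_l -addnS big_split_ord /= big1 ?add0r => [|k _]; last first.
  by rewrite coefp_node_eq0 ?mulr0.
have mn_lt : forall t : 'I_n.+1, (m + t < N)%N.
  by move=> t; rewrite (leq_ltn_trans _ ltlN) // def_l leq_add2l -ltnS.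
set K := (-1) ^+ m.+1 * _ * _.
rewrite (eq_bigr (fun t : 'I_n.+1 => K * (poch (1 - a0) t / t`!%:R
                  * (poch (a0 - 1) (n - t) / (n - t)`!%:R)))) => [|t _]; last first.
  by rewrite /= subnDl coefp_node // /K; ring.
rewrite -mulr_sumr sum_poch_div_fact.
have -> : 1 - a0 + (a0 - 1) = 0 by ring.
rewrite poch_0l; case: n {def_l mn_lt} => [|n].
  by rewrite addn0 !eqxx fact0 divr1 mulr1 mul1r.
by rewrite mul0r mulr0 addnS gtn_eqF ?mul0r // ltnS leq_addr.
Qed.

Variable gam : 'I_N -> R.
Hypotheses (gam_inj : injective gam) (gam_gt0 : forall s, 0 < gam s).

Definition nodal : {poly R} :=
  (poch a0 N / \prod_(s < N) (- gam s)) *: \prod_(s < N) ('X - (gam s)%:P).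

Lemma horner_nodal x : nodal.[x] = poch a0 N * \prod_(s < N) ((gam s - x) / gam s).
Proof.
rewrite hornerZ horner_prod -mulrA; congr (_ * _).
rewrite mulrC -prodf_div; apply: eq_bigr => s _; rewrite hornerXsubC.
have gam_neq0 : gam s != 0 by rewrite gt_eqF.
by field.
Qed.

Lemma size_nodal : (size nodal <= N.+1)%N.
Proof.
rewrite (leq_trans (size_scale_leq _ _)) // size_prod_XsubC.
by rewrite [index_enum _]unlock -enumT size_enum_ord.
Qed.

Lemma nodal_root s : nodal.[gam s] = 0.
Proof. by rewrite horner_nodal (bigD1 s) //= subrr mul0r mul0r mulr0. Qed.

Lemma nodal_neq0 x : (forall s, x != gam s) -> nodal.[x] != 0.
Proof.
move=> x_neq_gam; rewrite horner_nodal mulf_neq0 ?(gt_eqF (poch_gt0 _ a0_gt0)) //.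
apply/prodf_neq0 => s _; rewrite mulf_neq0 ?invr_eq0 ?(gt_eqF (gam_gt0 s)) //.
by rewrite subr_eq0 eq_sym.
Qed.

Lemma sysp_eq_nodal_on (b : 'I_N -> R) (rs : seq R) :
  uniq (0 :: rs) -> size rs = N -> {in rs, forall x, (sysp b).[x] = nodal.[x]} ->
  sysp b = nodal.
Proof.
move=> rs_uniq sz_rs eq_rs.
apply: (eq_poly_roots _ _ rs_uniq); rewrite /= ?sz_rs ?size_sysp ?size_nodal //.
move=> x; rewrite inE => /predU1P[->|/eq_rs //].
rewrite horner_sysp0 horner_nodal big1 ?mulr1 // => s _.
by rewrite subr0 divff // gt_eqF.
Qed.

Lemma sysp_eq_nodal b : (forall s, (sysp b).[gam s] = 0) -> sysp b = nodal.
Proof.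
move=> b_roots; apply: (@sysp_eq_nodal_on b [seq gam s | s <- enum 'I_N]).
- rewrite /= map_inj_uniq ?enum_uniq // andbT.
  by apply/mapP => -[s _ /eqP]; rewrite eq_sym gt_eqF.
- by rewrite size_map size_enum_ord.
- by move=> _ /mapP[s _ ->]; rewrite b_roots nodal_root.
Qed.

Lemma horner_sysp_bsol_node m : (m < N)%N ->
  (sysp (fun k => bsol a0 gam k)).[- (a0 + m%:R)] = nodal.[- (a0 + m%:R)].
Proof.
move=> ltmN; pose A i := poch (a0 - 1) i / i`!%:R.
pose w l := (-1) ^+ l.+1 * (poch (a0 + l.+1%:R) (N - l.+1) / (N - l.+1)`!%:R)
            * \prod_(s < N) ((gam s + a0 + l%:R) / gam s).
have bsolE k : bsol a0 gam k = \sum_(l < N | (k <= l)%N) w l * A (l - k)%N.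
  by rewrite /bsol big_geq_mkord; apply: eq_bigr => l _; rewrite /w /A; ring.
rewrite hornerD horner_coefp poch0 mul1r subn0.
have -> : - (a0 + m%:R) + a0 + 0%:R = - m%:R by ring.
rewrite poch_Nnat_eq0 // add0r horner_sum.
under eq_bigr => k _ do rewrite hornerZ bsolE mulr_suml.
rewrite (exchange_big_dep predT) //=.
have widen (l : 'I_N) (G : nat -> R) :
    \sum_(k < N | (k <= l)%N) G k = \sum_(k < l.+1) G k.
  by rewrite (big_ord_widen N).
under eq_bigr => l _.
  rewrite (widen l (fun k => w l * A (l - k)%N * (coefp N k.+1).[- (a0 + m%:R)])).
  under eq_bigr => k _ do rewrite -mulrA.
  rewrite -mulr_sumr sum_coefp_node //.
  over.
rewrite (bigD1 (Ordinal ltmN)) //= eqxx mul1r big1 ?addr0 => [|l ne_lm]; last first.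
  by rewrite (_ : (l == m :> nat) = false) ?mul0r ?mulr0 //; exact: negbTE ne_lm.
rewrite horner_nodal /w.
have -> : poch a0 N = poch a0 m.+1 * poch (a0 + m.+1%:R) (N - m.+1).
  by rewrite -pochD subnKC.
under [in RHS]eq_bigr => s _ do rewrite opprK addrA.
set sg := (-1) ^+ m.+1; set f := (N - m.+1)`!%:R; set C := \prod_(s < N) _.
have sg2 : sg * sg = 1 by rewrite -exprMn mulrNN mulr1 expr1n.
have f_neq0 : f != 0 by apply: natr_fact_neq0.
transitivity (sg * sg * (f / f) * (poch a0 m.+1 * poch (a0 + m.+1%:R) (N - m.+1) * C)).
  by ring.
by rewrite sg2 divff // !mul1r.
Qed.

Lemma sysp_bsol : sysp (fun k => bsol a0 gam k) = nodal.
Proof.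
apply: (@sysp_eq_nodal_on _ [seq - (a0 + m%:R) | m <- iota 0 N]).
- rewrite /= map_inj_uniq ?iota_uniq ?andbT; last first.
    by move=> m1 m2 /oppr_inj/addrI/eqP; rewrite eqr_nat => /eqP.
  apply/mapP => -[m _ /eqP]; rewrite eq_sym oppr_eq0 gt_eqF //.
  by rewrite ltr_wpDr.
- by rewrite size_map size_iota.
- move=> x /mapP[m]; rewrite mem_iota add0n => ltmN ->.
  exact: horner_sysp_bsol_node.
Qed.

End System.

Lemma det_coef_neq0 n (gam : 'I_n -> R) : injective gam -> (forall s, 0 <= gam s) ->
  \det (\matrix_(s < n, j < n) coef a0 (gam s) j) != 0.
Proof.
case: n gam => [|n] gam gam_inj gam_ge0; first by rewrite det_mx00 oner_neq0.
rewrite -det_tr; apply/det0P => -[v v_neq0 v_ker].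
suff v0 : forall j, v 0 j = 0.
  by move/eqP: v_neq0; apply; apply/rowP => j; rewrite v0 mxE.
apply: (@coefp_comb_eq0 n n.+1 0 _ [seq gam s | s <- enum 'I_n.+1]).
- by rewrite addn0.
- by rewrite map_inj_uniq ?enum_uniq.
- by rewrite size_map size_enum_ord.
move=> x /mapP[s _ ->]; rewrite horner_sum.
have poch_neq0 : poch (gam s + a0) n != 0.
  by rewrite gt_eqF // poch_gt0 // ltr_wpDl.
transitivity ((\sum_(j < n.+1) v 0 j * coef a0 (gam s) j) * poch (gam s + a0) n).
  rewrite mulr_suml; apply: eq_bigr => j _.
  by rewrite hornerZ addn0 (@coefE n j (gam s) (ltn_ord j)) // mulrA divfK.
move/rowP/(_ s): v_ker; rewrite !mxE => sum0.
rewrite (_ : \sum_(j < n.+1) _ = 0) ?mul0r // -[RHS]sum0.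
by apply: eq_bigr => j _; rewrite !mxE.
Qed.

End CoefPoly.

Theorem lemma1 (R : realFieldType) (a0 : R) (N : nat) (gam : 'I_N -> R)
  (ha0 : 0 < a0) (hN : (1 <= N)%N) (hinj : injective gam)
  (hpos : forall s, 0 < gam s) :
  \det (\matrix_(s < N, j < N) coef a0 (gam s) j) != 0
  /\
  (* b k stands for b_{k+1} *)
  (forall b : 'I_N -> R,
     (forall s : 'I_N, 1 + \sum_(j < N) coef a0 (gam s) j.+1 * b j = 0)
     <-> (forall k : 'I_N, b k = bsol a0 gam k))
  /\
  (forall g0 : R, 0 < g0 -> (forall s, g0 != gam s) ->
     1 + \sum_(j < N) coef a0 g0 j.+1 * bsol a0 gam j != 0).
Proof.
have system_eq0 g (b : 'I_N -> R) : 0 <= g ->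
    (1 + \sum_(j < N) coef a0 g j.+1 * b j == 0) = ((sysp a0 b).[g] == 0).
  move=> g_ge0; rewrite sysp_horner // mulf_eq0 invr_eq0 orbC.
  by rewrite gt_eqF ?poch_gt0 ?ltr_wpDl.
split; first by apply: det_coef_neq0 => // s; apply: ltW.
split=> [b|g0 g0_gt0 g0_neq_gam]; last first.
  rewrite (system_eq0 _ (fun k => bsol a0 gam k)) ?ltW //.
  by rewrite sysp_bsol // nodal_neq0.
split=> [b_sol | b_eq s].
  apply: (sysp_inj ha0); rewrite sysp_bsol // (sysp_eq_nodal hinj hpos) // => s.
  by apply/eqP; rewrite -system_eq0 ?b_sol ?ltW.
rewrite (eq_bigr (fun j : 'I_N => coef a0 (gam s) j.+1 * bsol a0 gam j)) => [|j _].
  apply/eqP; rewrite (system_eq0 _ (fun k => bsol a0 gam k)) ?ltW //.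
  by rewrite sysp_bsol // nodal_root.
by rewrite b_eq.
Qed.
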